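(* Let $1\to N\to G\to Q\to1$ be a short exact sequence of groups. If $G$ is SQ-universal, then $N$ or $Q$ is SQ-universal.
   Context: A group $G$ is SQ-universal if every countable group embeds in some quotient of $G$. *)

Record Group := {
  carrier :> Type;
  gmul : carrier -> carrier -> carrier;
  gone : carrier;
  ginv : carrier -> carrier;
  gmul_assoc : forall x y z, gmul x (gmul y z) = gmul (gmul x y) z;
  gmul_1l : forall x, gmul gone x = x;
  gmul_1r : forall x, gmul x gone = x;
  gmul_Vl : forall x, gmul (ginv x) x = gone;
  gmul_Vr : forall x, gmul x (ginv x) = gone
}.

Definition is_hom (A B : Group) (f : A -> B) : Prop :=
  forall x y : A, f (gmul A x y) = gmul B (f x) (f y).

Definition injective {A B : Type} (f : A -> B) : Prop :=
  forall x y, f x = f y -> x = y.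

Definition surjective {A B : Type} (f : A -> B) : Prop :=
  forall y, exists x, f x = y.

Definition countable (A : Type) : Prop :=
  exists f : A -> nat, injective f.

Definition short_exact (N G Q : Group) (i : N -> G) (p : G -> Q) : Prop :=
  is_hom N G i /\ is_hom G Q p /\ injective i /\ surjective p /\
  (forall g : G, p g = gone Q <-> exists n : N, i n = g).

(* G is SQ-universal: every countable group embeds in some quotient of G.
   A quotient of G is represented (up to isomorphism) as a group H together
   with a surjective homomorphism G -> H. *)
Definition SQ_universal (G : Group) : Prop :=
  forall C : Group, countable C ->
    exists (H : Group) (q : G -> H),
      is_hom G H q /\ surjective q /\
      exists e : C -> H, is_hom C H e /\ injective e.

(* If neither N nor Q is SQ-universal, pick countable groups C2, not embeddable in any
   quotient of N, and C1, not embeddable in any quotient of Q.  Both embed in one countable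
   group S in which the normal closure of every nontrivial element of C1 contains C2: let S
   act on C1 x Z x C2 by translations of the first factor (C1), twists of the last factor
   over the half-axis x = 1, n >= 0 (C2), and the shift of the axis.  The commutator of a
   twist with the shift is a pulse supported on the single fibre x = 1, n = 0, and this
   copy of C2 lies in the normal closure of any translation d <> 1, since conjugating by
   d moves twists off the axis.  Now let S embed in a quotient H of G and let M be the image
   of N in H.  If M meets C1 nontrivially it contains C2, and M is a quotient of N;
   otherwise C1 embeds in H / M, which is a quotient of Q. *)

From Stdlib Require Import Classical ClassicalEpsilon FunctionalExtensionality.
From Stdlib Require Import ProofIrrelevance PropExtensionality ZArith Lia List.
From Stdlib Require Cantor.

Declare Scope group_scope.
Open Scope group_scope.
Notation "x * y" := (gmul _ x y) : group_scope.
Notation "x ^-1" := (ginv _ x) (at level 2, left associativity, format "x ^-1") : group_scope.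
Notation "1" := (gone _) : group_scope.

Section GroupFacts.
Variable G : Group.
Implicit Types x y : G.

Lemma mulKg x y : x^-1 * (x * y) = y.
Proof. rewrite gmul_assoc, gmul_Vl, gmul_1l. reflexivity. Qed.

Lemma mulKVg x y : x * (x^-1 * y) = y.
Proof. rewrite gmul_assoc, gmul_Vr, gmul_1l. reflexivity. Qed.

Lemma invg_unique x y : x * y = 1 -> y = x^-1.
Proof. intros E. rewrite <- (mulKg x y), E, gmul_1r. reflexivity. Qed.

Lemma invgK x : x^-1^-1 = x.
Proof. symmetry. apply invg_unique, gmul_Vl. Qed.

Lemma invMg x y : (x * y)^-1 = y^-1 * x^-1.
Proof. symmetry. apply invg_unique. rewrite <- gmul_assoc, mulKVg. apply gmul_Vr. Qed.

Lemma invg1 : (1 : G)^-1 = 1.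
Proof. symmetry. apply invg_unique, gmul_1l. Qed.

End GroupFacts.

Ltac group_simpl := repeat (progress rewrite ?invMg, ?invgK, ?invg1, <-?gmul_assoc,
  ?gmul_1l, ?gmul_1r, ?gmul_Vl, ?gmul_Vr, ?mulKg, ?mulKVg).

Section Homomorphisms.
Variables (A B : Group) (f : A -> B).
Hypothesis f_hom : is_hom A B f.

Lemma hom_one : f 1 = 1.
Proof.
  pose proof (f_equal (gmul B (f 1)^-1) (f_hom 1 1)) as E.
  rewrite gmul_1l, mulKg, gmul_Vl in E. symmetry. exact E.
Qed.

Lemma hom_inv x : f x^-1 = (f x)^-1.
Proof. apply invg_unique. rewrite <- f_hom, gmul_Vr. apply hom_one. Qed.

Lemma hom_injective_of_trivial_kernel :
  (forall x, f x = 1 -> x = 1) -> injective f.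
Proof.
  intros ker x y E. rewrite <- (mulKVg A x y), (ker (x^-1 * y)), gmul_1r; [reflexivity|].
  rewrite f_hom, hom_inv, E. apply gmul_Vl.
Qed.

End Homomorphisms.

Lemma is_hom_comp (A B C : Group) (f : A -> B) (g : B -> C) :
  is_hom A B f -> is_hom B C g -> is_hom A C (fun x => g (f x)).
Proof. intros hf hg x y. rewrite hf, hg. reflexivity. Qed.

Record is_subgroup (G : Group) (M : G -> Prop) : Prop := {
  subgroup_one : M 1;
  subgroup_mul : forall x y, M x -> M y -> M (x * y);
  subgroup_inv : forall x, M x -> M x^-1 }.

Record is_normal (G : Group) (M : G -> Prop) : Prop := {
  normal_subgroup :> is_subgroup G M;
  normal_conj : forall t x, M x -> M (t * x * t^-1) }.

Definition kernel (A B : Group) (f : A -> B) (x : A) : Prop := f x = 1.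

Definition image (A B : Group) (f : A -> B) (M : A -> Prop) (y : B) : Prop :=
  exists x, M x /\ f x = y.

Lemma kernel_normal (A B : Group) (f : A -> B) :
  is_hom A B f -> is_normal A (kernel A B f).
Proof.
  unfold kernel. intros hf. repeat split.
  - apply hom_one, hf.
  - intros x y Ex Ey. rewrite hf, Ex, Ey. apply gmul_1l.
  - intros x Ex. rewrite hom_inv, Ex by exact hf. apply invg1.
  - intros t x Ex. rewrite hf, hf, Ex, gmul_1r, <- hf, gmul_Vr. apply hom_one, hf.
Qed.

Lemma image_normal (A B : Group) (f : A -> B) (M : A -> Prop) :
  is_hom A B f -> surjective f -> is_normal A M -> is_normal B (image A B f M).
Proof.
  intros hf fs [[M1 Mm Mi] Mc]. repeat split.
  - exists 1. split; [exact M1|]. apply hom_one, hf.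
  - intros _ _ [x [Mx <-]] [y [My <-]]. exists (x * y). split; [apply Mm; assumption|]. apply hf.
  - intros _ [x [Mx <-]]. exists x^-1. split; [apply Mi, Mx|]. apply hom_inv, hf.
  - intros t _ [x [Mx <-]]. destruct (fs t) as [s <-]. exists (s * x * s^-1).
    split; [apply Mc, Mx|]. rewrite hf, hf, hom_inv by exact hf. reflexivity.
Qed.

Lemma preimage_normal (A B : Group) (f : A -> B) (M : B -> Prop) :
  is_hom A B f -> is_normal B M -> is_normal A (fun x => M (f x)).
Proof.
  intros hf [[M1 Mm Mi] Mc]. repeat split.
  - rewrite hom_one by exact hf. exact M1.
  - intros x y Mx My. rewrite hf. apply Mm; assumption.
  - intros x Mx. rewrite hom_inv by exact hf. apply Mi, Mx.
  - intros t x Mx. rewrite hf, hf, hom_inv by exact hf. apply Mc, Mx.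
Qed.

Definition commg (G : Group) (x y : G) : G := x * y * x^-1 * y^-1.

Section NormalCommutators.
Variables (G : Group) (M : G -> Prop).
Hypothesis M_normal : is_normal G M.

Lemma normal_commg_r x y : M y -> M (commg G x y).
Proof.
  intros My. unfold commg. apply (subgroup_mul _ _ M_normal).
  - apply (normal_conj _ _ M_normal), My.
  - apply (subgroup_inv _ _ M_normal), My.
Qed.

Lemma normal_commg_l x y : M x -> M (commg G x y).
Proof.
  intros Mx. replace (commg G x y) with (x * (y * x^-1 * y^-1))
    by (unfold commg; group_simpl; reflexivity).
  apply (subgroup_mul _ _ M_normal); [exact Mx|].
  apply (normal_conj _ _ M_normal), (subgroup_inv _ _ M_normal), Mx.
Qed.

(* [[v, u], w] = [v, w] as soon as w commutes with u v^-1 u^-1. *)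
Lemma normal_commg_of_commute u v w :
  M u -> u * v^-1 * u^-1 * w = w * (u * v^-1 * u^-1) -> M (commg G v w).
Proof.
  intros Mu Ew.
  assert (Mvuw : M (commg G (commg G v u) w)) by apply normal_commg_l, normal_commg_r, Mu.
  set (c := u * v^-1 * u^-1) in Ew.
  replace (commg G (commg G v u) w) with (v * (c * w) * c^-1 * v^-1 * w^-1) in Mvuw
    by (unfold c, commg; group_simpl; reflexivity).
  rewrite Ew in Mvuw. revert Mvuw. unfold commg. group_simpl. exact id.
Qed.

End NormalCommutators.

Section Subgroup.
Variables (G : Group) (M : G -> Prop).
Hypothesis M_subgroup : is_subgroup G M.

Definition subgroup_group : Group.
Proof.
  refine {| carrier := {x : G | M x};
            gmul := fun x y => exist _ (proj1_sig x * proj1_sig y)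
                      (subgroup_mul _ _ M_subgroup _ _ (proj2_sig x) (proj2_sig y));
            gone := exist _ 1 (subgroup_one _ _ M_subgroup);
            ginv := fun x => exist _ (proj1_sig x)^-1
                      (subgroup_inv _ _ M_subgroup _ (proj2_sig x)) |};
    intros; repeat match goal with x : sig _ |- _ => destruct x end;
    apply subset_eq_compat.
  - apply gmul_assoc.
  - apply gmul_1l.
  - apply gmul_1r.
  - apply gmul_Vl.
  - apply gmul_Vr.
Defined.

End Subgroup.

Section Quotient.
Variables (G : Group) (M : G -> Prop).
Hypothesis M_normal : is_normal G M.

Definition coset (x : G) : G -> Prop := fun y => M (x^-1 * y).

Definition quotient_carrier : Type := {X : G -> Prop | exists x, X = coset x}.

Definition class (x : G) : quotient_carrier := exist _ (coset x) (ex_intro _ x eq_refl).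

Definition class_rep (X : quotient_carrier) : G :=
  proj1_sig (constructive_indefinite_description _ (proj2_sig X)).

Lemma class_repK X : class (class_rep X) = X.
Proof.
  destruct X as [X HX]. unfold class_rep. simpl.
  destruct constructive_indefinite_description as [x ->]. apply subset_eq_compat. reflexivity.
Qed.

Lemma class_eq x y : class x = class y <-> M (x^-1 * y).
Proof.
  destruct M_normal as [[M1 Mm Mi] _]. split.
  - intros E. apply (f_equal (@proj1_sig _ _)) in E. simpl in E.
    change (coset x y). rewrite E. unfold coset. rewrite gmul_Vl. exact M1.
  - intros Mxy. apply subset_eq_compat. extensionality z. apply propositional_extensionality.
    unfold coset. split; intros Mz.
    + replace (y^-1 * z) with ((x^-1 * y)^-1 * (x^-1 * z)) by (group_simpl; reflexivity).
      apply Mm; [apply Mi|]; assumption.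
    + replace (x^-1 * z) with ((x^-1 * y) * (y^-1 * z)) by (group_simpl; reflexivity).
      apply Mm; assumption.
Qed.

Definition class_mul (X Y : quotient_carrier) := class (class_rep X * class_rep Y).
Definition class_inv (X : quotient_carrier) := class (class_rep X)^-1.

Lemma class_mulE x y : class_mul (class x) (class y) = class (x * y).
Proof.
  destruct M_normal as [[_ Mm _] Mc]. unfold class_mul.
  set (x' := class_rep (class x)). set (y' := class_rep (class y)).
  assert (Mx : M (x'^-1 * x)) by (apply class_eq, class_repK).
  assert (My : M (y'^-1 * y)) by (apply class_eq, class_repK).
  apply class_eq.
  replace ((x' * y')^-1 * (x * y)) with (y'^-1 * (x'^-1 * x) * y'^-1^-1 * (y'^-1 * y))
    by (group_simpl; reflexivity).
  apply Mm; [apply Mc|]; assumption.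
Qed.

Lemma class_invE x : class_inv (class x) = class x^-1.
Proof.
  destruct M_normal as [_ Mc]. unfold class_inv.
  set (x' := class_rep (class x)).
  assert (Mx : M (x^-1 * x')) by (apply class_eq; symmetry; apply class_repK).
  apply class_eq.
  replace (x'^-1^-1 * x^-1) with (x * (x^-1 * x') * x^-1) by (group_simpl; reflexivity).
  apply Mc, Mx.
Qed.

Lemma class_surjective : surjective class.
Proof. intros X. exists (class_rep X). apply class_repK. Qed.

Definition quotient_group : Group.
Proof.
  refine {| carrier := quotient_carrier; gmul := class_mul; gone := class 1; ginv := class_inv |};
    intros; repeat match goal with
      | X : quotient_carrier |- _ => destruct (class_surjective X) as [? <-]; clear X
      end;
    rewrite ?class_invE, ?class_mulE; f_equal.
  - apply gmul_assoc.
  - apply gmul_1l.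
  - apply gmul_1r.
  - apply gmul_Vl.
  - apply gmul_Vr.
Defined.

Lemma quotient_exists : exists (K : Group) (pi : G -> K),
  is_hom G K pi /\ surjective pi /\ forall x, pi x = 1 <-> M x.
Proof.
  exists quotient_group, class. split; [|split].
  - intros x y. symmetry. apply class_mulE.
  - apply class_surjective.
  - intros x. change (class x = class 1 <-> M x). rewrite class_eq.
    group_simpl. split; intros Mx.
    + rewrite <- (invgK G x). apply (subgroup_inv _ _ M_normal), Mx.
    + apply (subgroup_inv _ _ M_normal), Mx.
Qed.

End Quotient.

Lemma hom_factor (G Q K : Group) (p : G -> Q) (f : G -> K) :
  is_hom G Q p -> surjective p -> is_hom G K f ->
  (forall g, p g = 1 -> f g = 1) ->
  exists phi : Q -> K, is_hom Q K phi /\ forall g, phi (p g) = f g.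
Proof.
  intros ph ps fh ker.
  assert (f_const : forall g g', p g = p g' -> f g = f g').
  { intros g g' E. rewrite <- (mulKVg G g g'), fh, (ker (g^-1 * g')), gmul_1r; [reflexivity|].
    rewrite ph, hom_inv, E by exact ph. apply gmul_Vl. }
  set (lift := fun x => proj1_sig (constructive_indefinite_description _ (ps x))).
  assert (liftK : forall x, p (lift x) = x).
  { intros x. unfold lift. destruct constructive_indefinite_description as [g E]. exact E. }
  exists (fun x => f (lift x)). split.
  - intros x y. rewrite <- fh. apply f_const. rewrite ph, !liftK. reflexivity.
  - intros g. apply f_const, liftK.
Qed.

Lemma countable_image (A B : Type) (f : A -> B) :
  countable A -> surjective f -> countable B.
Proof.
  intros [code code_inj] fs.
  set (lift := fun b => proj1_sig (constructive_indefinite_description _ (fs b))).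
  assert (liftK : forall b, f (lift b) = b).
  { intros b. unfold lift. destruct constructive_indefinite_description as [a E]. exact E. }
  exists (fun b => code (lift b)). intros b b' E.
  rewrite <- (liftK b), <- (liftK b'), (code_inj _ _ E). reflexivity.
Qed.

Fixpoint code_list (l : list nat) : nat :=
  match l with
  | nil => 0
  | a :: l => S (Cantor.to_nat (a, code_list l))
  end.

Lemma code_list_inj : injective code_list.
Proof.
  intros l; induction l as [|a l IH]; intros [|b l'] E; try discriminate; [reflexivity|].
  apply (f_equal (fun n => Cantor.of_nat (pred n))) in E. cbn [pred code_list] in E.
  rewrite !Cantor.cancel_of_to in E. injection E as -> E. f_equal. apply IH, E.
Qed.

Lemma countable_list (A : Type) : countable A -> countable (list A).
Proof.
  intros [code code_inj]. exists (fun l => code_list (map code l)).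
  intros l l' E. apply code_list_inj in E. revert l' E.
  induction l as [|a l IH]; intros [|b l'] E; try discriminate; [reflexivity|].
  injection E as Eab E. f_equal; [apply code_inj, Eab | apply IH, E].
Qed.

Section GeneratedPermutations.
Variables (X A : Type) (act : A -> X -> X) (inv : A -> A).
Hypothesis act_invK : forall a x, act (inv a) (act a x) = x.
Hypothesis invK : forall a, inv (inv a) = a.

Definition eval_word (w : list A) (x : X) : X := fold_right act x w.

Definition word_inv (w : list A) : list A := rev (map inv w).

Lemma eval_word_app w w' x : eval_word (w ++ w') x = eval_word w (eval_word w' x).
Proof. apply fold_right_app. Qed.

Lemma eval_word_invK w x : eval_word (word_inv w) (eval_word w x) = x.
Proof.
  induction w as [|a w IH]; [reflexivity|].
  unfold word_inv. simpl. rewrite eval_word_app. simpl. rewrite act_invK. apply IH.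
Qed.

Lemma word_invK w : word_inv (word_inv w) = w.
Proof.
  unfold word_inv. rewrite map_rev, map_map, rev_involutive.
  erewrite map_ext by apply invK. apply map_id.
Qed.

Lemma eval_word_invVK w x : eval_word w (eval_word (word_inv w) x) = x.
Proof. rewrite <- (word_invK w) at 1. apply eval_word_invK. Qed.

Definition is_word_perm (f : X -> X) : Prop := exists w, f = eval_word w.

Definition word_perm : Type := {f | is_word_perm f}.

Lemma word_perm_ext (f g : word_perm) : (forall x, proj1_sig f x = proj1_sig g x) -> f = g.
Proof.
  destruct f as [f Hf], g as [g Hg]. simpl. intros E.
  apply subset_eq_compat. extensionality x. apply E.
Qed.

Definition word_of (f : word_perm) : list A :=
  proj1_sig (constructive_indefinite_description _ (proj2_sig f)).

Lemma word_ofE f x : proj1_sig f x = eval_word (word_of f) x.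
Proof.
  unfold word_of. destruct constructive_indefinite_description as [w E]. rewrite E. reflexivity.
Qed.

Lemma is_word_perm_eval w : is_word_perm (eval_word w).
Proof. exists w. reflexivity. Qed.

Lemma is_word_perm_comp f g : is_word_perm f -> is_word_perm g -> is_word_perm (fun x => f (g x)).
Proof.
  intros [w ->] [w' ->]. exists (w ++ w'). extensionality x. symmetry. apply eval_word_app.
Qed.

Definition perm_group : Group.
Proof.
  refine {| carrier := word_perm;
            gmul := fun f g => exist _ (fun x => proj1_sig f (proj1_sig g x))
                      (is_word_perm_comp _ _ (proj2_sig f) (proj2_sig g));
            gone := exist _ (eval_word nil) (is_word_perm_eval nil);
            ginv := fun f => exist _ (eval_word (word_inv (word_of f)))
                      (is_word_perm_eval (word_inv (word_of f))) |};
    intros; apply word_perm_ext; intros p; simpl;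
    rewrite ?word_ofE, ?eval_word_invK, ?eval_word_invVK; reflexivity.
Defined.

Lemma perm_mulE (f g : perm_group) x : proj1_sig (f * g) x = proj1_sig f (proj1_sig g x).
Proof. reflexivity. Qed.

Definition perm_gen (a : A) : perm_group := exist _ (eval_word (a :: nil)) (is_word_perm_eval _).

Lemma perm_genE a x : proj1_sig (perm_gen a) x = act a x.
Proof. reflexivity. Qed.

Lemma perm_gen_inv a : (perm_gen a)^-1 = perm_gen (inv a).
Proof.
  symmetry. apply invg_unique, word_perm_ext. intros x. simpl.
  rewrite <- (invK a) at 1. apply act_invK.
Qed.

Lemma perm_group_countable : countable A -> countable perm_group.
Proof.
  intros cA.
  apply (countable_image (list A) perm_group (fun w => exist _ _ (is_word_perm_eval w))).
  - apply countable_list, cA.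
  - intros f. exists (word_of f). apply word_perm_ext. intros x. symmetry. apply word_ofE.
Qed.

End GeneratedPermutations.

Section Spreading.
Variables (D1 D2 : Group).

Definition point : Type := (D1 * (Z * D2))%type.

Definition translate (d : D1) (p : point) : point :=
  let '(x, (n, y)) := p in (d * x, (n, y)).

Definition twist (z : D2) (p : point) : point :=
  let '(x, (n, y)) := p in
  if excluded_middle_informative (x = 1) then if (0 <=? n)%Z then (x, (n, z * y)) else p else p.

Definition shift (up : bool) (p : point) : point :=
  let '(x, (n, y)) := p in
  if excluded_middle_informative (x = 1) then (x, (if up then Z.succ n else Z.pred n, y)) else p.

Definition pulse (z : D2) (p : point) : point :=
  let '(x, (n, y)) := p in
  if excluded_middle_informative (x = 1) then if (n =? 0)%Z then (x, (n, z * y)) else p else p.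

Inductive move : Type :=
| Translate (d : D1)
| Twist (z : D2)
| Shift (up : bool).

Definition move_act (m : move) : point -> point :=
  match m with
  | Translate d => translate d
  | Twist z => twist z
  | Shift up => shift up
  end.

Definition move_inv (m : move) : move :=
  match m with
  | Translate d => Translate d^-1
  | Twist z => Twist z^-1
  | Shift up => Shift (negb up)
  end.

Ltac point_cases :=
  simpl; repeat (match goal with
    | |- context [excluded_middle_informative ?P] => destruct (excluded_middle_informative P)
    | |- context [(?a <=? ?b)%Z] => destruct (Z.leb_spec a b)
    | |- context [(?a =? ?b)%Z] => destruct (Z.eqb_spec a b)
    end; simpl); try contradiction; try (exfalso; lia).

Lemma move_actK m p : move_act (move_inv m) (move_act m p) = p.
Proof.
  destruct p as [x [n y]], m as [d|z|[|]]; point_cases;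
    rewrite ?mulKg, ?Z.pred_succ, ?Z.succ_pred; reflexivity.
Qed.

Lemma move_invK m : move_inv (move_inv m) = m.
Proof. destruct m as [d|z|[|]]; simpl; rewrite ?invgK; reflexivity. Qed.

Lemma move_countable : countable D1 -> countable D2 -> countable move.
Proof.
  intros [c1 c1_inj] [c2 c2_inj].
  exists (fun m => match m with
                   | Translate d => (3 * c1 d)%nat
                   | Twist z => (3 * c2 z + 1)%nat
                   | Shift up => if up then 2%nat else 5%nat
                   end).
  intros [d|z|[|]] [d'|z'|[|]] E; try lia; f_equal; [apply c1_inj | apply c2_inj]; lia.
Qed.

Definition spread_group : Group := perm_group point move move_act move_inv move_actK move_invK.

Definition spread_gen (m : move) : spread_group :=
  perm_gen _ _ move_act move_inv move_actK move_invK m.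

Lemma fst_translate d p : fst (translate d p) = d * fst p.
Proof. destruct p as [x [n y]]. reflexivity. Qed.

Lemma fst_twist z p : fst (twist z p) = fst p.
Proof. destruct p as [x [n y]]. point_cases; reflexivity. Qed.

Lemma fst_shift up p : fst (shift up p) = fst p.
Proof. destruct p as [x [n y]]. point_cases; reflexivity. Qed.

Lemma twist_off_axis z p : fst p <> 1 -> twist z p = p.
Proof. destruct p as [x [n y]]. point_cases; reflexivity. Qed.

Lemma shift_off_axis up p : fst p <> 1 -> shift up p = p.
Proof. destruct p as [x [n y]]. point_cases; reflexivity. Qed.

Lemma translateK d p : translate d (translate d^-1 p) = p.
Proof. destruct p as [x [n y]]. simpl. rewrite mulKVg. reflexivity. Qed.

(* Conjugating by a translation [d <> 1] moves the twist off the axis, where the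
   shift acts trivially. *)
Lemma conj_twist_shift_commute d z up p : d <> 1 ->
  translate d (twist z (translate d^-1 (shift up p))) =
  shift up (translate d (twist z (translate d^-1 p))).
Proof.
  intros d1. destruct (excluded_middle_informative (fst p = 1)) as [on|off].
  - assert (moved : forall q, fst q = 1 -> fst (translate d^-1 q) <> 1).
    { intros q Eq E. rewrite fst_translate, Eq, gmul_1r in E. apply d1.
      rewrite <- (invgK D1 d), E. apply invg1. }
    rewrite !twist_off_axis, !translateK by (apply moved; rewrite ?fst_shift; exact on).
    reflexivity.
  - rewrite (shift_off_axis up p off), shift_off_axis; [reflexivity|].
    rewrite fst_translate, fst_twist, fst_translate, mulKVg. exact off.
Qed.

Lemma commg_twist_shift z p :
  twist z (shift true (twist z^-1 (shift false p))) = pulse z p.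
Proof.
  destruct p as [x [n y]]. point_cases; rewrite ?Z.succ_pred, ?mulKVg; reflexivity.
Qed.

Definition spread_translation (d : D1) : spread_group := spread_gen (Translate d).

Definition spread_pulse (z : D2) : spread_group :=
  commg spread_group (spread_gen (Twist z)) (spread_gen (Shift true)).

Lemma spread_pulseE z p : proj1_sig (spread_pulse z) p = pulse z p.
Proof.
  unfold spread_pulse, commg, spread_gen, spread_group. rewrite !perm_gen_inv.
  apply commg_twist_shift.
Qed.

Lemma spread_translation_hom : is_hom D1 spread_group spread_translation.
Proof.
  intros d d'. apply word_perm_ext. intros [x [n y]]. simpl. rewrite gmul_assoc. reflexivity.
Qed.

Lemma spread_pulse_hom : is_hom D2 spread_group spread_pulse.
Proof.
  intros z z'. apply word_perm_ext. intros p.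
  unfold spread_group. rewrite perm_mulE, !spread_pulseE.
  destruct p as [x [n y]]. point_cases; rewrite ?gmul_assoc; reflexivity.
Qed.

Lemma spread_pulse_inj : injective spread_pulse.
Proof.
  intros z z' E. apply (f_equal (fun s => snd (snd (proj1_sig s (1, (0%Z, 1)))))) in E.
  rewrite !spread_pulseE in E. revert E. point_cases. rewrite !gmul_1r. exact id.
Qed.

Lemma spread_normal_closure (P : spread_group -> Prop) :
  is_normal spread_group P -> forall d, d <> 1 -> P (spread_translation d) ->
  forall z, P (spread_pulse z).
Proof.
  intros P_normal d d1 Pd z.
  apply (normal_commg_of_commute _ _ P_normal (spread_translation d)); [exact Pd|].
  unfold spread_translation, spread_gen, spread_group. rewrite !perm_gen_inv.
  apply word_perm_ext. intros p. rewrite !perm_mulE, !perm_genE.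
  apply conj_twist_shift_commute, d1.
Qed.

End Spreading.

Lemma countable_overgroup_normal_closure (C1 C2 : Group) : countable C1 -> countable C2 ->
  exists (S : Group) (rho : C1 -> S) (sg : C2 -> S),
    countable S /\ is_hom C1 S rho /\ is_hom C2 S sg /\ injective sg /\
    forall P, is_normal S P -> forall d, d <> 1 -> P (rho d) -> forall z, P (sg z).
Proof.
  intros c1 c2. exists (spread_group C1 C2), (spread_translation C1 C2), (spread_pulse C1 C2).
  repeat split.
  - apply perm_group_countable, move_countable; assumption.
  - apply spread_translation_hom.
  - apply spread_pulse_hom.
  - apply spread_pulse_inj.
  - apply spread_normal_closure.
Qed.

Definition embeds_in_quotient (G C : Group) : Prop :=
  exists (H : Group) (q : G -> H), is_hom G H q /\ surjective q /\
    exists e : C -> H, is_hom C H e /\ injective e.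

Section Extension.
Variables (N G Q : Group) (i : N -> G) (p : G -> Q).
Hypothesis NGQ_exact : short_exact N G Q i p.
Variables (H : Group) (q : G -> H).
Hypotheses (q_hom : is_hom G H q) (q_surj : surjective q).

Local Notation M := (image G H q (kernel G Q p)).

Lemma image_kernel_normal : is_normal H M.
Proof.
  destruct NGQ_exact as (_ & p_hom & _).
  apply image_normal, kernel_normal; assumption.
Qed.

Lemma embeds_in_image_kernel (C : Group) (f : C -> H) :
  is_hom C H f -> injective f -> (forall c, M (f c)) -> embeds_in_quotient N C.
Proof.
  destruct NGQ_exact as (i_hom & _ & _ & _ & ker_p). intros f_hom f_inj fM.
  assert (iM : forall n, M (q (i n))).
  { intros n. exists (i n). split; [apply ker_p; exists n|]; reflexivity. }
  exists (subgroup_group H M image_kernel_normal), (fun n => exist _ (q (i n)) (iM n)).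
  split; [|split].
  - intros n n'. apply subset_eq_compat. simpl. rewrite i_hom. apply q_hom.
  - intros [h [g [pg <-]]]. destruct (proj1 (ker_p g) pg) as [n <-].
    exists n. apply subset_eq_compat. reflexivity.
  - exists (fun c => exist _ (f c) (fM c)). split.
    + intros c c'. apply subset_eq_compat. apply f_hom.
    + intros c c' E. apply f_inj. exact (f_equal (@proj1_sig _ _) E).
Qed.

Lemma embeds_in_quotient_by_image_kernel (C : Group) (f : C -> H) :
  is_hom C H f -> (forall c, M (f c) -> c = 1) -> embeds_in_quotient Q C.
Proof.
  destruct NGQ_exact as (_ & p_hom & _ & p_surj & _). intros f_hom fM.
  destruct (quotient_exists H M image_kernel_normal) as (K & pi & pi_hom & pi_surj & ker_pi).
  destruct (hom_factor G Q K p (fun g => pi (q g))) as (phi & phi_hom & phiE);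
    [assumption | assumption | apply is_hom_comp; assumption | |].
  { intros g pg. apply ker_pi. exists g. split; [exact pg | reflexivity]. }
  exists K, phi. split; [exact phi_hom | split].
  - intros k. destruct (pi_surj k) as [h <-]. destruct (q_surj h) as [g <-].
    exists (p g). apply phiE.
  - exists (fun c => pi (f c)).
    assert (pif_hom : is_hom C K (fun c => pi (f c))) by (apply is_hom_comp; assumption).
    split; [exact pif_hom|].
    apply hom_injective_of_trivial_kernel; [exact pif_hom|].
    intros c E. apply fM, ker_pi, E.
Qed.

End Extension.

Theorem lemma1p12 (N G Q : Group) (i : N -> G) (p : G -> Q) :
  short_exact N G Q i p -> SQ_universal G ->
  SQ_universal N \/ SQ_universal Q.
Proof.
  intros NGQ_exact G_univ.
  destruct (classic (SQ_universal N)) as [N_univ | N_not_univ]; [left; exact N_univ | right].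
  intros C1 C1_count.
  apply not_all_ex_not in N_not_univ as [C2 C2_bad].
  apply imply_to_and in C2_bad as [C2_count C2_not_embeds].
  destruct (countable_overgroup_normal_closure C1 C2 C1_count C2_count)
    as (S & rho & sg & S_count & rho_hom & sg_hom & sg_inj & spread).
  destruct (G_univ S S_count) as (H & q & q_hom & q_surj & e & e_hom & e_inj).
  set (M := image G H q (kernel G Q p)).
  destruct (classic (exists d, d <> 1 /\ M (e (rho d)))) as [[d [d1 Md]] | rho_avoids_M].
  - exfalso. apply C2_not_embeds.
    apply (embeds_in_image_kernel N G Q i p NGQ_exact H q q_hom q_surj C2 (fun z => e (sg z))).
    + apply is_hom_comp; assumption.
    + intros z z' E. apply sg_inj, e_inj, E.
    + apply (spread (fun s => M (e s))) with d; [|exact d1 | exact Md].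
      apply preimage_normal; [exact e_hom|].
      apply (image_kernel_normal N G Q i p NGQ_exact H q q_hom q_surj).
  - apply (embeds_in_quotient_by_image_kernel N G Q i p NGQ_exact H q q_hom q_surj C1
             (fun c => e (rho c))).
    + apply is_hom_comp; assumption.
    + intros c Mc. apply NNPP. intros c1. apply rho_avoids_M. exists c. split; assumption.
Qed.
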